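(* Fix $\upsilon\in(0,1]$ and let $\rho(\upsilon)=\lim_{p\to\infty,\ p\text{ prime}}\rho(\upsilon,p)$ (this limit exists). For each $N\ge 2$ let $\rho_2(\upsilon,N)=\min\{\Lambda_3(S): S\subseteq\mathbb{Z}_N,\ |S|\ge \upsilon N\}$. Then $\lim_{p\to\infty,\ p\text{ prime}}\rho_2(\upsilon,p)=\rho(\upsilon)$.
   Context: For an integer $N\ge 2$ and $f:\mathbb{Z}_N\to\mathbb{C}$, define $\mathbb{E}(f)=\frac1N\sum_{n\in\mathbb{Z}_N} f(n)$ and $\Lambda_3(f)=\frac{1}{N^2}\sum_{n,d\in\mathbb{Z}_N} f(n)f(n+d)f(n+2d)$. A set $S\subseteq\mathbb{Z}_N$ is identified with its indicator function, so $\Lambda_3(S)$ is $N^{-2}$ times the number of pairs $(n,d)\in\mathbb{Z}_N^2$ with $n,n+d,n+2d\in S$. For $\upsilon\in(0,1]$, $\rho(\upsilon,N)=\min\{\Lambda_3(f): f:\mathbb{Z}_N\to[0,1],\ \mathbb{E}(f)\ge\upsilon\}$. *)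

From HB Require Import structures.
From mathcomp Require Import all_boot all_order all_algebra.
From mathcomp Require Import classical_sets reals.
Set Implicit Arguments. Unset Strict Implicit. Unset Printing Implicit Defensive.
Import Order.TTheory GRing.Theory Num.Theory.
Local Open Scope ring_scope.
Local Open Scope classical_set_scope.

(* Z_N is modelled by 'Z_N, which is the genuine cyclic ring Z/NZ for N >= 2
   (the only case used: N prime). *)

Definition avgZ (R : realType) (N : nat) (f : 'Z_N -> R) : R :=
  N%:R^-1 * \sum_(n : 'Z_N) f n.

Definition Lambda3 (R : realType) (N : nat) (f : 'Z_N -> R) : R :=
  (N%:R ^+ 2)^-1 *
  \sum_(n : 'Z_N) \sum_(d : 'Z_N) f n * f (n + d) * f (n + d + d).

Definition indic (R : realType) (N : nat) (S : {set 'Z_N}) : 'Z_N -> R :=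
  fun x => (x \in S)%:R.

(* rho(upsilon, N) = min { Lambda3 f : f : Z_N -> [0,1], E(f) >= upsilon }
   (the minimum is attained by compactness; we take the infimum). *)
Definition rho (R : realType) (u : R) (N : nat) : R :=
  inf [set x : R | exists f : 'Z_N -> R,
         (forall n, 0 <= f n <= 1) /\ u <= avgZ f /\ x = Lambda3 f].

Definition rho2 (R : realType) (u : R) (N : nat) : R :=
  inf [set x : R | exists S : {set 'Z_N},
         u * N%:R <= #|S|%:R /\ x = Lambda3 (indic R S)].

Definition prime_limit (R : realType) (a : nat -> R) (L : R) : Prop :=
  forall eps : R, 0 < eps ->
    exists P : nat, forall p : nat, prime p -> (P <= p)%N -> `|a p - L| < eps.

From HB Require Import structures.
From mathcomp Require Import all_boot all_order all_algebra.
From mathcomp Require Import classical_sets reals.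
From mathcomp Require Import ring lra.
Set Implicit Arguments. Unset Strict Implicit. Unset Printing Implicit Defensive.
Import Order.TTheory GRing.Theory Num.Theory.
Local Open Scope ring_scope.

(* Indicator functions are admissible, so rho(u,p) <= rho2(u,p).  Conversely,
   split p^2 Lambda3 f into the diagonal sum of f(n)^3 and the off-diagonal sum
   over d <> 0.  For odd p the points n, n + d, n + 2d of an off-diagonal term are
   distinct, so moving mass t from f(j) to f(i) turns the term into a product of
   three affine functions of t whose slopes (1, -1 or 0) have pairwise
   nonpositive products; such a product is concave in t.  Pushing t to an end of
   its admissible range therefore never increases the off-diagonal sum, keeps the
   mean, and makes one more value 0 or 1 (pipage rounding).  Once at most one
   value is fractional, rounding it up costs at most 3p off the diagonal and p on
   it, whence rho2(u,p) <= rho(u,p) + 4/p. *)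


Lemma affine_prod3_chord_le (R : realFieldType) (x y z a b c lo hi : R) :
  0 <= x -> 0 <= y -> 0 <= z -> a * b <= 0 -> a * c <= 0 -> b * c <= 0 ->
  lo <= 0 -> 0 <= hi ->
  hi * ((x + lo * a) * (y + lo * b) * (z + lo * c))
  - lo * ((x + hi * a) * (y + hi * b) * (z + hi * c)) <= (hi - lo) * (x * y * z).
Proof.
move=> x0 y0 z0 ab ac bc lo0 hi0.
(* (abc)^2 = (ab)(ac)(bc) <= 0 kills the t^3 term of the cubic. *)
have abc0 : a * b * c = 0.
  apply/eqP; rewrite -sqrf_eq0 eq_le sqr_ge0 andbT.
  have -> : (a * b * c) ^+ 2 = (a * b) * ((a * c) * (b * c)) by ring.
  by rewrite mulr_le0_ge0 // mulr_le0.
have -> : hi * ((x + lo * a) * (y + lo * b) * (z + lo * c))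
  - lo * ((x + hi * a) * (y + hi * b) * (z + hi * c)) =
  (hi - lo) * (x * y * z) - hi * lo * (hi - lo) * (x * (b * c) + y * (a * c) + z * (a * b))
  + hi * lo * (lo - hi) * (hi + lo) * (a * b * c) by ring.
rewrite abc0 mulr0 addr0 lerBlDr lerDl.
apply: mulr_le0; first by apply: mulr_le0_ge0; [apply: mulr_ge0_le0|lra].
have := mulr_ge0_le0 x0 bc; have := mulr_ge0_le0 y0 ac; have := mulr_ge0_le0 z0 ab.
lra.
Qed.

Lemma Zp_addrr_eq0 (p : nat) (d : 'Z_p) : (1 < p)%N -> odd p -> (d + d == 0) = (d == 0).
Proof.
move=> p_gt1 p_odd; rewrite -!(inj_eq val_inj) /=.
have d_lt_p : (d < p)%N by rewrite -[X in (_ < X)%N](Zp_cast p_gt1) ltn_ord.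
move: (nat_of_ord d) d_lt_p => k k_lt_p; rewrite Zp_cast //.
rewrite -/(dvdn p (k + k)) addnn -muln2 Gauss_dvdl; last by rewrite coprime_sym coprime2n.
by rewrite /dvdn modn_small.
Qed.

Lemma prod3_sub_le (R : realFieldType) (x y z x' y' z' : R) :
  0 <= x' <= x -> x <= 1 -> 0 <= y' <= y -> y <= 1 -> 0 <= z' <= z -> z <= 1 ->
  x * y * z - x' * y' * z' <= (x - x') + (y - y') + (z - z').
Proof.
move=> /andP[x'0 x'x] x1 /andP[y'0 y'y] y1 /andP[z'0 z'z] z1.
have -> : x * y * z - x' * y' * z' =
  (x - x') * (y * z) + (y - y') * (x' * z) + (z - z') * (x' * y') by ring.
have le_diff (s t w : R) : t <= s -> 0 <= w <= 1 -> (s - t) * w <= s - t.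
  by move=> ts /andP[w0 w1]; rewrite ler_piMr ?subr_ge0.
rewrite !lerD // le_diff // ?mulr_ge0 ?mulr_ile1 //; lra.
Qed.

Lemma Lambda3_ge0 (R : realType) (N : nat) (f : 'Z_N -> R) :
  (forall m, 0 <= f m) -> 0 <= Lambda3 f.
Proof.
move=> f_ge0; rewrite /Lambda3 mulr_ge0 ?invr_ge0 ?exprn_ge0 //.
by apply: sumr_ge0 => n _; apply: sumr_ge0 => d _; rewrite !mulr_ge0.
Qed.

Section PipageRounding.
Variables (R : realType) (p : nat).
Hypotheses (p_gt1 : (1 < p)%N) (p_odd : odd p).
Local Notation Z := 'Z_p.

Definition Lambda3_offdiag (f : Z -> R) : R :=
  \sum_(n : Z) \sum_(d : Z | d != 0) f n * f (n + d) * f (n + d + d).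

Definition bounded01 (f : Z -> R) := forall m, 0 <= f m <= 1.

Definition fractional (f : Z -> R) : {set Z} := [set m | 0 < f m < 1].

Definition transfer (i j m : Z) : R := (m == i)%:R - (m == j)%:R.

Definition move_mass (f : Z -> R) i j t : Z -> R := fun m => f m + t * transfer i j m.

Lemma ap3_distinct (n d : Z) : d != 0 ->
  [/\ n != n + d, n != n + d + d & n + d != n + d + d].
Proof.
move=> d_neq0; have dd_neq0 : d + d != 0 by rewrite Zp_addrr_eq0.
split; last by rewrite -{1}[n + d]addr0 (inj_eq (addrI _)) eq_sym.
  by rewrite -{1}[n]addr0 (inj_eq (addrI _)) eq_sym.
by rewrite -addrA -{1}[n]addr0 (inj_eq (addrI _)) eq_sym.
Qed.

Lemma transfer_mul_le0 i j a b : i != j -> a != b -> transfer i j a * transfer i j b <= 0.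
Proof.
move=> ij ab; rewrite /transfer.
by do 4!case: eqP => ? /=; subst; rewrite ?eqxx in ij ab *; lra.
Qed.

Lemma Lambda3_offdiag_chord_le f i j lo hi :
  (forall m, 0 <= f m) -> i != j -> lo <= 0 -> 0 <= hi ->
  hi * Lambda3_offdiag (move_mass f i j lo) - lo * Lambda3_offdiag (move_mass f i j hi)
  <= (hi - lo) * Lambda3_offdiag f.
Proof.
move=> f_ge0 ij lo_le0 hi_ge0; rewrite /Lambda3_offdiag !mulr_sumr -sumrB.
apply: ler_sum => n _; rewrite !mulr_sumr -sumrB; apply: ler_sum => d d_neq0.
have [nd ndd dd] := ap3_distinct n d_neq0.
by apply: affine_prod3_chord_le => //; apply: transfer_mul_le0.
Qed.

Lemma move_massE f i j t m : i != j ->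
  move_mass f i j t m = if m == i then f i + t else if m == j then f j - t else f m.
Proof.
move=> ij; rewrite /move_mass /transfer.
by have [->|_] := eqVneq m i; [rewrite (negbTE ij) | case: eqVneq => [->|_]]; rewrite /=; lra.
Qed.

Lemma sum_move_mass f i j t : \sum_m move_mass f i j t m = \sum_m f m.
Proof.
have sum_eq1 k : \sum_(m : Z) (m == k)%:R = 1 :> R.
  by rewrite (bigD1 k) //= eqxx big1 ?addr0 // => m /negbTE ->.
by rewrite big_split /= -mulr_sumr /transfer sumrB !sum_eq1 subrr mulr0 addr0.
Qed.

Lemma move_mass_fractional_proper f i j t : bounded01 f -> i != j ->
  i \in fractional f -> j \in fractional f ->
  0 <= f i + t <= 1 -> 0 <= f j - t <= 1 ->
  [\/ f i + t = 0, f i + t = 1, f j - t = 0 | f j - t = 1] ->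
  bounded01 (move_mass f i j t) /\ (#|fractional (move_mass f i j t)| < #|fractional f|)%N.
Proof.
move=> f01 ij i_frac j_frac fi_t fj_t t_end; split.
  by move=> m; rewrite move_massE //; case: ifP => // _; case: ifP.
apply/proper_card/properP; split.
  apply/fintype.subsetP => m; rewrite !inE move_massE //.
  case: ifP => [/eqP -> _ | _]; first by rewrite inE in i_frac.
  by case: ifP => [/eqP -> _ | _ //]; rewrite inE in j_frac.
have ji : (j == i) = false by rewrite eq_sym (negbTE ij).
by case: t_end => t_end; [exists i | exists i | exists j | exists j];
  rewrite // inE move_massE // ?eqxx ?ji t_end; lra.
Qed.

Lemma move_mass_descent f i j : bounded01 f -> i != j ->
  i \in fractional f -> j \in fractional f ->
  exists t, [/\ bounded01 (move_mass f i j t),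
    (#|fractional (move_mass f i j t)| < #|fractional f|)%N
    & Lambda3_offdiag (move_mass f i j t) <= Lambda3_offdiag f].
Proof.
move=> f01 ij i_frac j_frac.
have := i_frac; have := j_frac; rewrite !inE => /andP[fj0 fj1] /andP[fi0 fi1].
(* [lo, hi] is the range of t keeping both moved values in [0, 1]; by concavity
   one of its endpoints does not increase Lambda3_offdiag. *)
pose lo := Num.max (- f i) (f j - 1); pose hi := Num.min (1 - f i) (f j).
have lo_le0 : lo <= 0 by rewrite ge_max; lra.
have hi_gt0 : 0 < hi by rewrite lt_min; lra.
have [lo01 lo_frac] : bounded01 (move_mass f i j lo) /\
    (#|fractional (move_mass f i j lo)| < #|fractional f|)%N.
  rewrite /lo /Order.max; case: ltP => h;
    apply: move_mass_fractional_proper => //; try lra.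
  - by apply: Or44; lra.
  - by apply: Or41; lra.
have [hi01 hi_frac] : bounded01 (move_mass f i j hi) /\
    (#|fractional (move_mass f i j hi)| < #|fractional f|)%N.
  rewrite /hi /Order.min; case: ltP => h;
    apply: move_mass_fractional_proper => //; try lra.
  - by apply: Or42; lra.
  - by apply: Or43; lra.
clearbody lo hi; have f_ge0 m : 0 <= f m by case/andP: (f01 m).
have chord := Lambda3_offdiag_chord_le f_ge0 ij lo_le0 (ltW hi_gt0).
have [lo_le | lo_gt] := lerP (Lambda3_offdiag (move_mass f i j lo)) (Lambda3_offdiag f).
  by exists lo.
exists hi; split => //; rewrite leNgt; apply/negP => hi_gt.
have : hi * Lambda3_offdiag f < hi * Lambda3_offdiag (move_mass f i j lo) by rewrite ltr_pM2l.
have : - lo * Lambda3_offdiag f <= - lo * Lambda3_offdiag (move_mass f i j hi).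
  by apply: ler_wpM2l; lra.
lra.
Qed.

Lemma pipage_rounding f : bounded01 f ->
  exists g, [/\ bounded01 g, (#|fractional g| <= 1)%N,
    \sum_m g m = \sum_m f m & Lambda3_offdiag g <= Lambda3_offdiag f].
Proof.
move=> f01; have [k] := ubnP #|fractional f|; elim: k f f01 => // k IH f f01 f_lt.
have [le1 | /card_gt1P [i [j [i_frac j_frac ij]]]] := leqP #|fractional f| 1.
  by exists f.
have [t [t01 t_frac t_le]] := move_mass_descent f01 ij i_frac j_frac.
have [g [g01 g_frac g_sum g_le]] := IH _ t01 (leq_trans t_frac (ltnSE f_lt)).
exists g; split => //; first by rewrite g_sum sum_move_mass.
exact: le_trans t_le.
Qed.

Lemma card_Zp_type : #|{: Z}| = p.
Proof. by rewrite card_ord Zp_cast. Qed.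

Lemma sum_const_Zp (c : R) : \sum_(m : Z) c = p%:R * c.
Proof. by rewrite sumr_const card_Zp_type mulr_natl. Qed.

Lemma sum_indic (A : {set Z}) : \sum_m indic R A m = #|A|%:R.
Proof.
rewrite -sumr_const [RHS]big_mkcond /=; apply: eq_bigr => m _.
by rewrite /indic; case: (m \in A).
Qed.

Lemma bounded01_indic (A : {set Z}) : bounded01 (indic R A).
Proof. by move=> m; rewrite /indic; case: (m \in A); rewrite /= ?lexx ?ler01. Qed.

Lemma sum_ap3 (h : Z -> R) :
  \sum_(n : Z) \sum_(d : Z) (h n + h (n + d) + h (n + d + d)) = 3%:R * p%:R * \sum_m h m.
Proof.
have sum_shift (s : Z) : \sum_(n : Z) h (n + s) = \sum_m h m.
  by rewrite [RHS](reindex_inj (addIr s)).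
have e1 : \sum_(n : Z) \sum_(d : Z) h n = p%:R * \sum_m h m.
  by rewrite mulr_sumr; apply: eq_bigr => n _; rewrite sum_const_Zp.
have e2 : \sum_(n : Z) \sum_(d : Z) h (n + d) = p%:R * \sum_m h m.
  rewrite -sum_const_Zp; apply: eq_bigr => n _.
  by under eq_bigr do rewrite addrC; rewrite sum_shift.
have e3 : \sum_(n : Z) \sum_(d : Z) h (n + d + d) = p%:R * \sum_m h m.
  rewrite exchange_big /= -sum_const_Zp; apply: eq_bigr => d _.
  by under eq_bigr do rewrite -addrA; rewrite sum_shift.
under eq_bigr do rewrite !big_split /=.
rewrite !big_split /= e1 e2 e3; lra.
Qed.

Lemma Lambda3E (f : Z -> R) :
  Lambda3 f = (p%:R ^+ 2)^-1 * (\sum_n f n * f n * f n + Lambda3_offdiag f).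
Proof.
rewrite /Lambda3 /Lambda3_offdiag -big_split /=; congr (_ * _).
by apply: eq_bigr => n _; rewrite (bigD1 0) //= !addr0.
Qed.

Lemma Lambda3_offdiag_sub_le (g h : Z -> R) :
  (forall m, 0 <= g m <= h m) -> (forall m, h m <= 1) ->
  Lambda3_offdiag h - Lambda3_offdiag g <= 3%:R * p%:R * \sum_m (h m - g m).
Proof.
move=> gh h_le1; rewrite -sum_ap3 /Lambda3_offdiag -sumrB; apply: ler_sum => n _.
rewrite -sumrB [X in _ <= X](bigD1 0) //= addrC -[X in X <= _]addr0 lerD //; last first.
  have D_ge0 m : 0 <= h m - g m by rewrite subr_ge0; case/andP: (gh m).
  have := D_ge0 n; have := D_ge0 (n + 0); have := D_ge0 (n + 0 + 0); lra.
by apply: ler_sum => d _; apply: prod3_sub_le.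
Qed.

Definition round_up (g : Z -> R) : {set Z} := [set m | 0 < g m].

Lemma round_up_spec g : bounded01 g -> (#|fractional g| <= 1)%N ->
  \sum_m g m <= #|round_up g|%:R /\
  Lambda3_offdiag (indic R (round_up g)) <= Lambda3_offdiag g + 3%:R * p%:R.
Proof.
move=> g01 g_frac.
have g_le m : 0 <= g m <= indic R (round_up g) m.
  by rewrite /indic inE; have /andP[g0 g1] := g01 m; case: ltP; rewrite /= g0.
have gap m : indic R (round_up g) m - g m <= indic R (fractional g) m.
  rewrite /indic !inE; have /andP[g0 g1] := g01 m.
  by case: (ltP 0 (g m)); case: (ltP (g m) 1); rewrite /=; lra.
have gap_sum : \sum_m (indic R (round_up g) m - g m) <= 1.
  apply: le_trans (ler_sum _ (fun m _ => gap m)) _.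
  by rewrite sum_indic lern1.
split; first by rewrite -sum_indic; apply: ler_sum => m _; case/andP: (g_le m).
have := Lambda3_offdiag_sub_le g_le (fun m => proj2 (andP (bounded01_indic _ m))).
have : 3%:R * p%:R * \sum_m (indic R (round_up g) m - g m) <= 3%:R * p%:R :> R.
  by rewrite ler_piMr ?mulr_ge0.
lra.
Qed.

Lemma Lambda3_round (f : Z -> R) : bounded01 f ->
  exists S : {set Z}, \sum_m f m <= #|S|%:R /\
    Lambda3 (indic R S) <= Lambda3 f + 4%:R / p%:R.
Proof.
move=> f01; have [g [g01 g_frac g_sum g_le]] := pipage_rounding f01.
have [S_card S_le] := round_up_spec g01 g_frac.
exists (round_up g); split; first by rewrite -g_sum.
have p_gt0 : 0 < p%:R :> R by rewrite ltr0n ltnW.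
have diag_S : \sum_n indic R (round_up g) n * indic R (round_up g) n
    * indic R (round_up g) n <= p%:R.
  rewrite -[p%:R]mulr1 -sum_const_Zp; apply: ler_sum => n _.
  have /andP[i0 i1] := bounded01_indic (round_up g) n.
  by rewrite !mulr_ile1 ?mulr_ge0.
have diag_f : 0 <= \sum_n f n * f n * f n.
  by apply: sumr_ge0 => n _; have /andP[f0 _] := f01 n; rewrite !mulr_ge0.
rewrite !Lambda3E -[4%:R / p%:R](mulKf (lt0r_neq0 (exprn_gt0 2 p_gt0))) -mulrDr.
apply: ler_wpM2l; first by rewrite invr_ge0 exprn_ge0 // ltW.
have -> : p%:R ^+ 2 * (4%:R / p%:R) = 4%:R * p%:R :> R.
  by field; rewrite lt0r_neq0.
lra.
Qed.

Lemma rho_le_rho2 (u : R) : u <= 1 -> rho u p <= rho2 u p.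
Proof.
move=> u_le1; have p_gt0 : 0 < p%:R :> R by rewrite ltr0n ltnW.
apply: lb_le_inf.
  exists (Lambda3 (indic R [set: Z])), [set: Z]; split => //.
  by rewrite cardsT card_Zp_type ler_piMl // ltW.
move=> _ [S [S_card ->]]; apply: ge_inf.
  by exists 0 => _ [f [f01 [_ ->]]]; apply: Lambda3_ge0 => m; case/andP: (f01 m).
exists (indic R S); split; first exact: bounded01_indic.
by split => //; rewrite /avgZ sum_indic ler_pdivlMl // mulrC.
Qed.

Lemma rho2_le_rho (u : R) : u <= 1 -> rho2 u p <= rho u p + 4%:R / p%:R.
Proof.
move=> u_le1; have p_gt0 : 0 < p%:R :> R by rewrite ltr0n ltnW.
rewrite -lerBlDr; apply: lb_le_inf.
  exists (Lambda3 (fun _ : Z => 1 : R)), (fun _ => 1); split.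
    by move=> m; rewrite lexx ler01.
  by rewrite /avgZ sum_const_Zp mulr1 mulVf ?lt0r_neq0.
move=> _ [f [f01 [u_le ->]]].
have [S [S_card S_le]] := Lambda3_round f01.
rewrite lerBlDr; apply: le_trans S_le; apply: ge_inf.
  by exists 0 => _ [S' [_ ->]]; apply: Lambda3_ge0 => m; exact: ler0n.
exists S; split => //; apply: le_trans S_card.
by move: u_le; rewrite /avgZ ler_pdivlMl // mulrC.
Qed.

Lemma rho2_near_rho (u : R) : u <= 1 -> `|rho2 u p - rho u p| <= 4%:R / p%:R.
Proof.
move=> u_le1; have := rho_le_rho2 u_le1; have := rho2_le_rho u_le1.
by rewrite ler_norml; lra.
Qed.

End PipageRounding.

Lemma prime_limit_near (R : realType) (a b : nat -> R) (L C : R) (P0 : nat) :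
  (forall p, prime p -> (P0 <= p)%N -> `|b p - a p| <= C / p%:R) ->
  prime_limit a L -> prime_limit b L.
Proof.
move=> ab_near a_lim eps eps_gt0.
have [P a_near] := a_lim _ (divr_gt0 eps_gt0 (ltr0n R 2)).
exists (maxn (maxn P P0) (Num.truncn (2%:R * C / eps)).+1) => p p_prime.
rewrite !geq_max => /andP[/andP[Pp P0p] Cp].
have p_gt0 : 0 < p%:R :> R by rewrite ltr0n (leq_trans _ Cp).
have C_small : C / p%:R < eps / 2%:R.
  have : 2%:R * C / eps < p%:R by apply: lt_le_trans (truncnS_gt _) _; rewrite ler_nat.
  by rewrite ltr_pdivrMr // ltr_pdivrMr // mulrAC ltr_pdivlMr //; lra.
have := ab_near p p_prime P0p; have := a_near p p_prime Pp.
have := ler_distD (a p) (b p) L.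
lra.
Qed.

Theorem mainTheorem2 (R : realType) (u : R) (hu0 : 0 < u) (hu1 : u <= 1)
  (rhoU : R) (hlim : prime_limit (fun p => rho u p) rhoU) :
  prime_limit (fun p => rho2 u p) rhoU.
Proof.
apply: (prime_limit_near (C := 4%:R) (P0 := 3)) hlim => p p_prime p_ge3.
have p_odd : odd p by case: (even_prime p_prime) => // p_eq2; rewrite p_eq2 in p_ge3.
by apply: rho2_near_rho; rewrite ?prime_gt1.
Qed.
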